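(* Let $\mathcal{D}$ be a finite set of disks in the plane, and let $(C_1,C_2)$ be a pair of congruent disks of smallest possible common radius such that every $D\in\mathcal{D}$ satisfies $D\subseteq C_1$ or $D\subseteq C_2$. Assume the centers of $C_1$ and $C_2$ are distinct and let $\ell$ be the perpendicular bisector of the segment connecting them. Then for $i\in\{1,2\}$, $D\subseteq C_i$ for every $D\in\mathcal{D}$ whose center lies on the same (closed) side of $\ell$ as the center of $C_i$.
   Context: Disks are closed disks in the plane. The paper assumes throughout that no disk of $\mathcal{D}$ contains another disk of $\mathcal{D}$. *)

From HB Require Import structures.
From mathcomp Require Import all_boot all_order all_algebra.
From mathcomp Require Import reals.
Set Implicit Arguments. Unset Strict Implicit. Unset Printing Implicit Defensive.
Import Order.TTheory GRing.Theory Num.Theory.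
Local Open Scope ring_scope.

Definition point (R : realType) := (R * R)%type.

Definition dist (R : realType) (p q : point R) : R :=
  Num.sqrt ((p.1 - q.1) ^+ 2 + (p.2 - q.2) ^+ 2).

Definition disk (R : realType) := (point R * R)%type.
Definition center (R : realType) (D : disk R) : point R := D.1.
Definition radius (R : realType) (D : disk R) : R := D.2.

Definition in_disk (R : realType) (D : disk R) (p : point R) : Prop :=
  dist p (center D) <= radius D.

Definition disk_sub (R : realType) (D E : disk R) : Prop :=
  forall p : point R, in_disk D p -> in_disk E p.

Definition covering_pair (R : realType) (s : seq (disk R)) (C1 C2 : disk R) : Prop :=
  0 <= radius C1 /\ radius C1 = radius C2 /\
  forall D, D \in s -> disk_sub D C1 \/ disk_sub D C2.

Definition optimal_covering_pair (R : realType) (s : seq (disk R)) (C1 C2 : disk R) : Prop :=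
  covering_pair s C1 C2 /\
  forall C1' C2', covering_pair s C1' C2' -> radius C1 <= radius C1'.

Definition disk_family (R : realType) (s : seq (disk R)) : Prop :=
  (forall D, D \in s -> 0 < radius D) /\
  (forall D E, D \in s -> E \in s -> D != E -> ~ disk_sub D E).

(* p lies on the closed side of the perpendicular bisector of segment [a b]
   that contains a. *)
Definition on_side_of_bisector (R : realType) (a b p : point R) : Prop :=
  dist p a <= dist p b.

(* A disk D of radius rho lies in a disk C of radius r iff
   |center D - center C| + rho <= r.  If D is covered by C2 and its center is
   at least as close to the center of C1, then
   |center D - center C1| + rho <= |center D - center C2| + rho <= r2 = r1,
   so D is covered by C1 as well. *)
From HB Require Import structures.
From mathcomp Require Import all_boot all_order all_algebra.
From mathcomp Require Import reals ring lra.
Set Implicit Arguments. Unset Strict Implicit. Unset Printing Implicit Defensive.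
Import Order.TTheory GRing.Theory Num.Theory.
Local Open Scope ring_scope.

Section PlaneDistance.
Variable R : realType.
Implicit Types (p q : point R) (D C : disk R).

Lemma dist_ge0 p q : 0 <= dist p q.
Proof. exact: sqrtr_ge0. Qed.

Lemma sqr_dist p q : dist p q ^+ 2 = (p.1 - q.1) ^+ 2 + (p.2 - q.2) ^+ 2.
Proof. by rewrite sqr_sqrtr // addr_ge0 ?sqr_ge0. Qed.

Lemma sqrt_sum_sqr_le (a1 a2 b1 b2 : R) :
  Num.sqrt ((a1 + b1) ^+ 2 + (a2 + b2) ^+ 2) <=
  Num.sqrt (a1 ^+ 2 + a2 ^+ 2) + Num.sqrt (b1 ^+ 2 + b2 ^+ 2).
Proof.
set Sab := Num.sqrt _; set Sa := Num.sqrt _; set Sb := Num.sqrt _.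
have sq_sqrt (x y : R) : Num.sqrt (x ^+ 2 + y ^+ 2) ^+ 2 = x ^+ 2 + y ^+ 2.
  by rewrite sqr_sqrtr // addr_ge0 ?sqr_ge0.
have Sab2 : Sab ^+ 2 = (a1 + b1) ^+ 2 + (a2 + b2) ^+ 2 by exact: sq_sqrt.
have Sa2 : Sa ^+ 2 = a1 ^+ 2 + a2 ^+ 2 by exact: sq_sqrt.
have Sb2 : Sb ^+ 2 = b1 ^+ 2 + b2 ^+ 2 by exact: sq_sqrt.
have Sab0 : 0 <= Sab by exact: sqrtr_ge0.
have Sa0 : 0 <= Sa by exact: sqrtr_ge0.
have Sb0 : 0 <= Sb by exact: sqrtr_ge0.
(* Cauchy-Schwarz, from Lagrange's identity *)
have cauchy_schwarz : a1 * b1 + a2 * b2 <= Sa * Sb.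
  have lagrange : (a1 * b1 + a2 * b2) ^+ 2 <= (Sa * Sb) ^+ 2.
    by rewrite exprMn Sa2 Sb2; have := sqr_ge0 (a1 * b2 - a2 * b1); nra.
  have := mulr_ge0 Sa0 Sb0; nra.
nra.
Qed.

Lemma dist_triangle p m q : dist p q <= dist p m + dist m q.
Proof.
rewrite /dist.
have -> : p.1 - q.1 = (p.1 - m.1) + (m.1 - q.1) by ring.
have -> : p.2 - q.2 = (p.2 - m.2) + (m.2 - q.2) by ring.
exact: sqrt_sum_sqr_le.
Qed.

Definition translate p (k : R) (u : point R) : point R :=
  (p.1 + k * u.1, p.2 + k * u.2).

Lemma dist_translate_unit p (k : R) (u : point R) :
  0 <= k -> u.1 ^+ 2 + u.2 ^+ 2 = 1 -> dist (translate p k u) p = k.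
Proof.
move=> k0 u1; rewrite /dist /translate /=.
have -> : (p.1 + k * u.1 - p.1) ^+ 2 + (p.2 + k * u.2 - p.2) ^+ 2 =
          k ^+ 2 * (u.1 ^+ 2 + u.2 ^+ 2) by ring.
by rewrite u1 mulr1 sqrtr_sqr ger0_norm.
Qed.

(* For p = q the direction is arbitrary; we pick (1, 0). *)
Lemma unit_direction p q :
  exists u : point R, u.1 ^+ 2 + u.2 ^+ 2 = 1 /\ p = translate q (dist p q) u.
Proof.
have [t0 | tn0] := eqVneq (dist p q) 0.
  have : (p.1 - q.1) ^+ 2 + (p.2 - q.2) ^+ 2 == 0 by rewrite -sqr_dist t0 expr0n.
  rewrite paddr_eq0 ?sqr_ge0 // !sqrf_eq0 subr_eq0 [_.2 - _ == 0]subr_eq0.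
  case/andP=> /eqP e1 /eqP e2; exists (1, 0) => /=; split.
    by rewrite expr1n expr0n addr0.
  by rewrite t0 /translate /= !mul0r !addr0 -e1 -e2; case: p {t0 e1 e2}.
exists ((p.1 - q.1) / dist p q, (p.2 - q.2) / dist p q) => /=; split.
  by rewrite !expr_div_n -mulrDl -sqr_dist divff // sqrf_eq0.
by rewrite /translate /= ![dist p q * _]mulrC !divfK // !subrKC; case: p {tn0}.
Qed.

Lemma disk_subP D C : 0 <= radius D ->
  disk_sub D C <-> dist (center D) (center C) + radius D <= radius C.
Proof.
move=> rD0; split => [DC | hle p]; last first.
  by rewrite /in_disk => hp; have := @dist_triangle p (center D) (center C); lra.
(* the point of D farthest from the center of C *)
have [u [u1 eD]] := unit_direction (center D) (center C).
set t := dist _ _ in eD *.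
have far_eq : translate (center D) (radius D) u = translate (center C) (t + radius D) u.
  by rewrite eD /translate /=; congr pair; ring.
have := DC (translate (center D) (radius D) u).
rewrite /in_disk dist_translate_unit // far_eq dist_translate_unit ?addr_ge0 ?dist_ge0 //.
by apply.
Qed.

Lemma disk_sub_nearer D C1 C2 : 0 <= radius D -> radius C1 = radius C2 ->
  dist (center D) (center C1) <= dist (center D) (center C2) ->
  disk_sub D C2 -> disk_sub D C1.
Proof.
move=> rD0 r12 near /(disk_subP C2 rD0) DC2.
by apply/(disk_subP C1 rD0); lra.
Qed.

End PlaneDistance.

Theorem mainTheorem14 (R : realType) (s : seq (disk R)) (C1 C2 : disk R) :
  disk_family s ->
  optimal_covering_pair s C1 C2 ->
  center C1 != center C2 ->
  forall D, D \in s ->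
    (on_side_of_bisector (center C1) (center C2) (center D) -> disk_sub D C1) /\
    (on_side_of_bisector (center C2) (center C1) (center D) -> disk_sub D C2).
Proof.
move=> [rpos _] [[_ [r12 cover]] _] _ D Ds.
have rD0 : 0 <= radius D by exact/ltW/rpos.
rewrite /on_side_of_bisector.
split=> near; case: (cover D Ds) => sub //.
- exact: (disk_sub_nearer rD0 r12 near sub).
- exact: (disk_sub_nearer rD0 (esym r12) near sub).
Qed.
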